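(* Let $A\in\mathrm U(d)$. Then there is a unitary $B\in\mathrm U(d)$ such that $B^2=1_d$ and $\|B-A\|\le\|1_d-A^2\|$ for every unitarily invariant norm $\|\cdot\|$ on $\mathrm M_d(\mathbb C)$.
   Context: A norm $\|\cdot\|$ on $\mathrm M_d(\mathbb C)$ is unitarily invariant if $\|UAV\|=\|A\|$ for all $A\in\mathrm M_d(\mathbb C)$ and $U,V\in\mathrm U(d)$. *)

From HB Require Import structures.
From mathcomp Require Import all_boot all_order all_algebra.
From mathcomp Require Import sesquilinear spectral.
From mathcomp Require Import complex.
From mathcomp Require Import reals.
Set Implicit Arguments. Unset Strict Implicit. Unset Printing Implicit Defensive.
Import Order.TTheory GRing.Theory Num.Theory.
Local Open Scope ring_scope.

(* Complex numbers: C = R[i] with R : realType (the real numbers).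
   |c| for c : R[i] is [ComplexField.Normc.normc c : R] (= sqrt (Re c^2 + Im c^2)). *)

Definition is_mxnorm (R : realType) (d : nat) (N : 'M[R[i]]_d -> R) : Prop :=
  [/\ (forall A, 0 <= N A),
      (forall A, N A = 0 -> A = 0),
      (forall (c : R[i]) A, N (c *: A) = ComplexField.Normc.normc c * N A) &
      (forall A B, N (A + B) <= N A + N B)].

Definition unitarily_invariant_norm (R : realType) (d : nat)
    (N : 'M[R[i]]_d -> R) : Prop :=
  is_mxnorm N /\
  (forall (A U V : 'M[R[i]]_d), U \is unitarymx -> V \is unitarymx ->
     N (U *m A *m V) = N A).

From HB Require Import structures.
From mathcomp Require Import all_boot all_order all_algebra.
From mathcomp Require Import sesquilinear spectral.
From mathcomp Require Import complex.
From mathcomp Require Import reals.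
Import Order.TTheory GRing.Theory Num.Theory.
Local Open Scope ring_scope.
Local Open Scope sesquilinear_scope.

(* Only the normality of A matters.  Diagonalize A = U diag(l) U^* with U
   unitary and take B = U diag(e) U^*, where e_j = +-1 is the sign of Re l_j.
   For e = +-1 we have |1 - l^2| = |e - l| |1 + e l| and Re (1 + e l) >= 1,
   so |e - l| <= |1 - l^2| entrywise.  A unitarily invariant norm is
   monotone in the moduli of the entries of a diagonal matrix: if
   |x_j| <= |y_j| then 2 x_j = (u_j + v_j) y_j with |u_j| = |v_j| = 1, so
   diag x is the average of two unitary multiples of diag y. *)

Section ScalarFacts.
Context {C : numClosedFieldType}.

Definition sign_re (z : C) : C := if 0 <= 'Re z then 1 else -1.

Lemma norm_sign_re z : `|sign_re z| = 1.
Proof. by rewrite /sign_re; case: ifP; rewrite ?normrN normr1. Qed.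

Lemma sign_re_sqr z : sign_re z ^+ 2 = 1.
Proof. by rewrite /sign_re; case: ifP; rewrite ?sqrrN expr1n. Qed.

Lemma norm_ge1_Re (w : C) : 1 <= 'Re w -> 1 <= `|w|.
Proof. by move=> /le_trans; apply; apply: leif_Re_Creal. Qed.

Lemma Re1 : 'Re (1 : C) = 1.
Proof. exact/Creal_ReP/real1. Qed.

Lemma norm_sign_re_sub z : `|sign_re z - z| <= `|1 - z ^+ 2|.
Proof.
rewrite -{1}(expr1n C 2) subr_sqr normrM /sign_re.
case: ifPn => [zRe_ge0 | zRe_lt0].
  rewrite ler_peMr ?normr_ge0 //; apply: norm_ge1_Re.
  by rewrite raddfD /= Re1 lerDl.
rewrite -opprD normrN mulrC ler_peMr ?normr_ge0 //; apply: norm_ge1_Re.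
rewrite raddfB /= Re1 lerDl oppr_ge0.
by rewrite ltW // real_ltNge ?Creal_Re ?real0.
Qed.

Lemma norm_le1_sum_unit (a : C) : `|a| <= 1 ->
  exists u v : C, [/\ `|u| = 1, `|v| = 1 & u + v = a *+ 2].
Proof.
move=> a_le1; have [->|a_neq0] := eqVneq a 0.
  by exists 1, (-1); rewrite normrN normr1 subrr mul0rn.
set r := `|a|; set s := sqrtC (1 - r ^+ 2).
have r_gt0 : 0 < r by rewrite normr_gt0.
have s_ge0 : 0 <= s by rewrite sqrtC_ge0 subr_ge0 exprn_ile1 ?normr_ge0.
have norm_witness t :
    t \is Num.real -> t ^+ 2 = s ^+ 2 -> `|a / r * (r + 'i * t)| = 1.
  move=> t_real ts; rewrite normrM normf_div normr_id divff ?gt_eqF // mul1r.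
  by rewrite normC_rect ?normr_real // ts sqrtCK addrC subrK sqrtC1.
exists (a / r * (r + 'i * s)), (a / r * (r + 'i * - s)); split.
- exact: norm_witness (ger0_real s_ge0) _.
- by apply: norm_witness; rewrite ?sqrrN ?rpredN ?ger0_real.
- by rewrite -mulrDr mulrN addrACA subrr addr0 -mulr2n mulrnAr divfK ?gt_eqF.
Qed.

Lemma norm_le_sum_unit_mul (x y : C) : `|x| <= `|y| ->
  exists u v : C, [/\ `|u| = 1, `|v| = 1 & x *+ 2 = (u + v) * y].
Proof.
have [-> | y_neq0] := eqVneq y 0.
  rewrite normr0 normr_le0 => /eqP ->.
  by exists 1, 1; rewrite normr1 mulr0 mul0rn.
move=> le_xy; have /norm_le1_sum_unit [u [v [u1 v1 uv]]] : `|x / y| <= 1.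
  by rewrite normf_div ler_pdivrMr ?normr_gt0 // mul1r.
exists u, v; split => //.
by rewrite uv -mulrnAl divfK.
Qed.

End ScalarFacts.

Lemma conjmxB (F : fieldType) m n (V : 'M[F]_(m, n)) (f g : 'M[F]_n) :
  conjmx V (f - g) = conjmx V f - conjmx V g.
Proof. by rewrite /conjmx mulmxBr mulmxBl. Qed.

Section UnitaryMatrices.
Context {C : numClosedFieldType}.

Lemma diag_mx_unitary n (u : 'rV[C]_n) :
  (forall j, `|u 0 j| = 1) -> diag_mx u \is unitarymx.
Proof.
move=> u1; apply/unitarymxP.
rewrite tr_diag_mx map_diag_mx mulmx_diag -diag_const_mx; congr diag_mx.
by apply/rowP => j; rewrite !mxE -normCK u1 expr1n.
Qed.

Lemma unitarymx1 n : (1%:M : 'M[C]_n) \is unitarymx.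
Proof. by rewrite -diag_const_mx diag_mx_unitary // => j; rewrite mxE normr1. Qed.

Lemma unitary_normalmx n (A : 'M[C]_n) : A \is unitarymx -> A \is normalmx.
Proof.
move=> A_unitary; apply/normalmxP.
by rewrite (unitarymxP A_unitary) -invmx_unitary // mulVmx ?unitarymx_unit.
Qed.

Lemma trmxC_spectral_unitarymx {n} (A : 'M[C]_n) :
  (spectralmx A)^t* \is unitarymx.
Proof. by rewrite trmxC_unitary spectral_unitarymx. Qed.

Lemma normalmx_spectral_conjmx n (A : 'M[C]_n) : A \is normalmx ->
  A = conjmx ((spectralmx A)^t*) (diag_mx (spectral_diag A)).
Proof.
move=> /orthomx_spectralP {1}->.
rewrite conjymx ?trmxC_spectral_unitarymx // trmxCK.
by rewrite invmx_unitary ?spectral_unitarymx.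
Qed.

End UnitaryMatrices.

Definition re_sign_mx {C : numClosedFieldType} {n} (A : 'M[C]_n) : 'M[C]_n :=
  conjmx ((spectralmx A)^t*) (diag_mx (map_mx (@sign_re C) (spectral_diag A))).

Section ReSignMx.
Context {C : numClosedFieldType} {n : nat} (A : 'M[C]_n).

Lemma re_sign_mx_unitary : re_sign_mx A \is unitarymx.
Proof.
rewrite /re_sign_mx conjymx ?trmxC_spectral_unitarymx // trmxCK.
rewrite !mul_unitarymx ?trmxC_spectral_unitarymx ?spectral_unitarymx //.
by apply: diag_mx_unitary => j; rewrite mxE norm_sign_re.
Qed.

Lemma re_sign_mx_involutive : re_sign_mx A *m re_sign_mx A = 1%:M.
Proof.
have U_unit := unitarymx_unit (trmxC_spectral_unitarymx A).
rewrite /re_sign_mx -conjmxM ?inE ?stablemx_unit // mulmx_diag.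
set e := map_mx (@sign_re C) _; have -> : \row_j (e 0 j * e 0 j) = const_mx 1.
  by apply/rowP => j; rewrite !mxE -expr2 sign_re_sqr.
by rewrite diag_const_mx conjmx_scalar ?row_free_unit.
Qed.

End ReSignMx.

Lemma normc_natr (R : rcfType) k : ComplexField.Normc.normc (k%:R : R[i]) = k%:R.
Proof. by rewrite -[k%:R]/(1 *+ k) normcMn ComplexField.Normc.normc1. Qed.

Section UnitarilyInvariantNorm.
Variables (R : realType) (d : nat) (N : 'M[R[i]]_d -> R).
Hypothesis N_ui : unitarily_invariant_norm N.

Lemma uinorm_mull U M : U \is unitarymx -> N (U *m M) = N M.
Proof. by move=> U_unitary; rewrite -[U *m M]mulmx1 N_ui.2 ?unitarymx1. Qed.

Lemma uinorm_conjmx U M : U \is unitarymx -> N (conjmx U M) = N M.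
Proof. by move=> U_unitary; rewrite conjymx // N_ui.2 ?trmxC_unitary. Qed.

Lemma uinorm_diag_le (x y : 'rV[R[i]]_d) :
  (forall j, `|x 0 j| <= `|y 0 j|) -> N (diag_mx x) <= N (diag_mx y).
Proof.
have [[_ _ NZ ND] _] := N_ui.
move=> /(_ _) /norm_le_sum_unit_mul => /fin_all_exists [u] /fin_all_exists [v] uv.
set Du := diag_mx (\row_j u j); set Dv := diag_mx (\row_j v j).
have Du_unitary : Du \is unitarymx.
  by apply: diag_mx_unitary => j; rewrite mxE; case: (uv j).
have Dv_unitary : Dv \is unitarymx.
  by apply: diag_mx_unitary => j; rewrite mxE; case: (uv j).
have x2 : diag_mx x *+ 2 = Du *m diag_mx y + Dv *m diag_mx y.
  rewrite /Du /Dv -mulmxDl -raddfD -raddfMn /= mulmx_diag; congr diag_mx.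
  by apply/rowP => j; rewrite !mxE -mulr2n; case: (uv j) => _ _ ->.
have N_mul2 M : N (M *+ 2) = N M *+ 2.
  by rewrite -scaler_nat NZ normc_natr mulr_natl.
rewrite -(ler_pMn2r (n := 2)) // -N_mul2 x2 (le_trans (ND _ _)) //.
by rewrite !uinorm_mull // mulr2n.
Qed.

Lemma uinorm_re_sign_mx_sub (A : 'M[R[i]]_d) : A \is normalmx ->
  N (re_sign_mx A - A) <= N (1%:M - A *m A).
Proof.
move=> /normalmx_spectral_conjmx A_spectral; rewrite /re_sign_mx.
set U := (spectralmx A)^t* in A_spectral *.
set l := spectral_diag A in A_spectral *.
have U_unitary : U \is unitarymx by apply: trmxC_spectral_unitarymx.
have U_unit := unitarymx_unit U_unitary.
have U_free : row_free U by rewrite row_free_unit.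
rewrite A_spectral -conjmxB -conjmxM ?inE ?stablemx_unit //.
rewrite -[1%:M in X in _ <= X](conjmx_scalar 1 U_free) -conjmxB.
rewrite !uinorm_conjmx // -raddfB mulmx_diag -diag_const_mx -raddfB /=.
apply: uinorm_diag_le => j; rewrite !mxE -expr2; exact: norm_sign_re_sub.
Qed.

End UnitarilyInvariantNorm.

Theorem proposition1p4 (R : realType) (d : nat) (A : 'M[R[i]]_d) :
  A \is unitarymx ->
  exists B : 'M[R[i]]_d,
    [/\ B \is unitarymx,
        B *m B = 1%:M &
        forall N : 'M[R[i]]_d -> R, unitarily_invariant_norm N ->
          N (B - A) <= N (1%:M - A *m A)].
Proof.
move=> A_unitary; exists (re_sign_mx A); split.
- exact: re_sign_mx_unitary.
- exact: re_sign_mx_involutive.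
- move=> N N_ui; apply: uinorm_re_sign_mx_sub => //.
  exact: unitary_normalmx.
Qed.
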